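(* If the patch size $n$ (number of interior points per patch) is a multiple of the microscale period $p$ of the diffusivities, then the patch scheme applied directly to the single heterogeneous lattice diffusion $d^2\partial_t u_i=\kappa_{i+\frac12}(u_{i+1}-u_i)+\kappa_{i-\frac12}(u_{i-1}-u_i)$ (without forming the ensemble of phase-shifts), with edge values $u^I_{n+1}=E_x^{r}u^I_1$, $u^I_0=E_x^{-r}u^I_n$, is consistent (to arbitrarily high order in $H$) with the homogenisation $\partial_tV=\mathcal K_2\partial_x^2V+\mathcal K_4d^2\partial_x^4V+\cdots$ of that heterogeneous diffusion, $\mathcal K_2=p/\sum_{\ell=0}^{p-1}\kappa_{\ell+1/2}^{-1}$.
   Context: Diffusivities $\kappa_{i+1/2}$ real, positive, $p$-periodic. Patches: $N$ patches on a macroscale-periodic domain, spacing $H$, $n$ interior points each of lattice spacing $d$, width $h=nd=rH$; all patches positioned so that their diffusivity pattern is identical. $E_x^{\pm r}$ denotes the macroscale shift by $\pm rH$ (one patch width) through the patches, realised by interpolation. ''Consistent'' means the mid-patch values obey the same lattice evolution operator as the full-domain system when the shifts $E_x^{\pm r}$ are exact. *)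

From Stdlib Require Import Reals ZArith.
Open Scope R_scope.

(* Convention: kappa j stands for the diffusivity kappa_{j+1/2}, so
   kappa (j-1) is kappa_{j-1/2}.  Lattice point j sits at x_j = j*d. *)

Definition full_rhs (kappa : Z -> R) (d : R) (u : Z -> R) (j : Z) : R :=
  (kappa j * (u (j + 1)%Z - u j) + kappa (j - 1)%Z * (u (j - 1)%Z - u j)) / (d ^ 2).

(* Lattice index of the i-th point (i = 0..n+1) of patch I: patches are
   spaced Hd lattice points apart (H = Hd*d), patch 0 starting after b. *)
Definition patch_pos (b Hd : Z) (I : nat) (i : Z) : Z := (b + Z.of_nat I * Hd + i)%Z.

Definition patch_value (n : Z) (U : Z -> R) (EL ER : R) (i : Z) : R :=
  if Z.eqb i 0 then EL else if Z.eqb i (n + 1) then ER else U i.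

Definition patch_rhs (kappa : Z -> R) (d : R) (b Hd n : Z)
    (U : nat -> Z -> R) (EL ER : nat -> R) (I : nat) (i : Z) : R :=
  let w := patch_value n (U I) (EL I) (ER I) in
  let j := patch_pos b Hd I i in
  (kappa j * (w (i + 1)%Z - w i) + kappa (j - 1)%Z * (w (i - 1)%Z - w i)) / (d ^ 2).

(* A field u on the lattice is represented by its
   phase fields v q : R -> R (u_j = v j (j*d), v p-periodic in the phase),
   i.e. the smooth interpolants through the points of each phase. *)
Definition exact_shift (v : Z -> R -> R) (q : Z) (s x : R) : R := v q (x + s).

Definition lattice_field (v : Z -> R -> R) (d : R) (j : Z) : R := v j (IZR j * d).

(** With the exact shifts, the edge value [E_x^{r} u_1] is the phase-[j]
    field evaluated one patch width further on.  When the period [p]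
    divides [n], the lattice point [n] steps away has the same phase, so the
    edge value is precisely the full-domain value [u_{j+n}]; likewise on the
    left.  The patch then sees exactly the full-domain neighbours, so its
    lattice operator coincides with the full one at every interior point. *)

From Stdlib Require Import Reals ZArith Lia.
Open Scope R_scope.

Lemma periodic_add_mul (A : Type) (f : Z -> A) (p : Z) :
  (forall q, f (q + p)%Z = f q) -> forall k q, f (q + k * p)%Z = f q.
Proof.
  intros Hper k; induction k as [|k IHk|k IHk] using Z.peano_ind; intro q.
  - now rewrite Z.add_0_r.
  - replace (q + Z.succ k * p)%Z with (q + k * p + p)%Z by lia.
    now rewrite Hper.
  - rewrite <- (IHk q), <- Hper.
    f_equal; lia.
Qed.

Lemma exact_shift_lattice_field (p m j : Z) (d : R) (v : Z -> R -> R) :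
  (forall q, v (q + p)%Z = v q) -> (p | m)%Z ->
  exact_shift v j (IZR m * d) (IZR j * d) = lattice_field v d (j + m).
Proof.
  intros Hvph [k ->].
  unfold exact_shift, lattice_field.
  rewrite (periodic_add_mul _ v p Hvph), plus_IZR.
  f_equal; ring.
Qed.

Lemma patch_value_restriction (n : Z) (w : Z -> R) (i : Z) :
  patch_value n w (w 0%Z) (w (n + 1)%Z) i = w i.
Proof.
  unfold patch_value.
  destruct (Z.eqb_spec i 0) as [->|_]; [reflexivity|].
  destruct (Z.eqb_spec i (n + 1)) as [->|_]; reflexivity.
Qed.

Lemma patch_rhs_restriction (kappa : Z -> R) (d : R) (b Hd n : Z)
    (u : Z -> R) (U : nat -> Z -> R) (EL ER : nat -> R) (I : nat) (i : Z) :
  U I = (fun i => u (patch_pos b Hd I i)) ->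
  EL I = u (patch_pos b Hd I 0) ->
  ER I = u (patch_pos b Hd I (n + 1)) ->
  patch_rhs kappa d b Hd n U EL ER I i = full_rhs kappa d u (patch_pos b Hd I i).
Proof.
  intros HU HL HR.
  unfold patch_rhs, full_rhs; cbv zeta.
  rewrite HU, HL, HR, !(patch_value_restriction n (fun i => u (patch_pos b Hd I i))).
  unfold patch_pos.
  replace (b + Z.of_nat I * Hd + (i + 1))%Z with (b + Z.of_nat I * Hd + i + 1)%Z by lia.
  replace (b + Z.of_nat I * Hd + (i - 1))%Z with (b + Z.of_nat I * Hd + i - 1)%Z by lia.
  reflexivity.
Qed.

Theorem corollary6
  (p n Hd b : Z) (N : nat) (d : R) (kappa : Z -> R) (v : Z -> R -> R)
  (Hp : (0 < p)%Z) (Hn : (0 < n)%Z) (HHd : (0 < Hd)%Z) (HN : (0 < N)%nat)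
  (Hd0 : 0 < d)
  (Hkpos : forall j, 0 < kappa j)
  (Hkper : forall j, kappa (j + p)%Z = kappa j)
  (Hpatt : (p | Hd)%Z)                       (* identical diffusivity pattern in every patch *)
  (Hvph : forall q, v (q + p)%Z = v q)         (* phase fields depend only on phase mod p *)
  (Hvper : forall q x, v q (x + INR N * IZR Hd * d) = v q x)  (* macroscale periodic domain *)
  (Hmult : (p | n)%Z) :                        (* patch size a multiple of the period *)
  let u := lattice_field v d in
  let U := fun (I : nat) (i : Z) => u (patch_pos b Hd I i) in
  let ER := fun I => exact_shift v (patch_pos b Hd I 1) (IZR n * d)
                       (IZR (patch_pos b Hd I 1) * d) in   (* u^I_{n+1} = E^r u^I_1 *)
  let EL := fun I => exact_shift v (patch_pos b Hd I n) (- (IZR n * d))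
                       (IZR (patch_pos b Hd I n) * d) in   (* u^I_0 = E^{-r} u^I_n *)
  forall (I : nat) (i : Z), (I < N)%nat -> (1 <= i <= n)%Z ->
    patch_rhs kappa d b Hd n U EL ER I i = full_rhs kappa d u (patch_pos b Hd I i).
Proof.
  intros u U ER EL I i _ _.
  apply patch_rhs_restriction; [reflexivity | |].
  - unfold EL; cbv beta; rewrite Ropp_mult_distr_l, <- opp_IZR.
    rewrite (exact_shift_lattice_field p _ _ _ _ Hvph (proj2 (Z.divide_opp_r p n) Hmult)).
    unfold u; f_equal; unfold patch_pos; lia.
  - unfold ER; cbv beta; rewrite (exact_shift_lattice_field p _ _ _ _ Hvph Hmult).
    unfold u; f_equal; unfold patch_pos; lia.
Qed.
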